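(* Let $s\ge 2$, $t\ge 2$ and $n=s+t-1$. The graph $K^{s,t}_{n}$ is determined by its $D$-spectrum: every connected graph $D$-cospectral to $K^{s,t}_{n}$ is isomorphic to $K^{s,t}_{n}$.
   Context: All graphs are simple, undirected and connected. For a connected graph $G$, the distance matrix $D(G)$ has as $(i,j)$-entry the distance between the $i$-th and $j$-th vertices; its eigenvalues form the $D$-spectrum of $G$. Two graphs are $D$-cospectral if they have the same $D$-spectrum; $G$ is determined by its $D$-spectrum if every graph $D$-cospectral to $G$ is isomorphic to $G$. $K^{s,t}_{n}$ denotes the graph obtained from disjoint copies of $K_s$ and $K_t$ by identifying a vertex of $K_s$ with a vertex of $K_t$. *)

From mathcomp Require Import all_boot all_order fingroup perm all_algebra.
Set Implicit Arguments. Unset Strict Implicit. Unset Printing Implicit Defensive.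
Import GRing.Theory Num.Theory.

Definition simple_graph (T : finType) (e : rel T) : Prop :=
  symmetric e /\ irreflexive e.

Definition connected_graph (T : finType) (e : rel T) : Prop :=
  forall u v : T, connect e u v.

Fixpoint ball (T : finType) (e : rel T) (u : T) (k : nat) : {set T} :=
  match k with
  | 0 => [set u]
  | k'.+1 => ball e u k' :|: [set y | [exists x in ball e u k', e x y]]
  end.

(* Graph distance: least k such that v is within k steps of u
   (for connected graphs this is < #|T|). *)
Definition dist (T : finType) (e : rel T) (u v : T) : nat :=
  find (fun k => v \in ball e u k) (iota 0 #|T|).

Definition distmx (n : nat) (e : rel 'I_n) : 'M[int]_n :=
  \matrix_(i, j) Posz (dist e i j).

Definition D_cospectral (n : nat) (e1 e2 : rel 'I_n) : Prop :=
  char_poly (distmx e1) = char_poly (distmx e2).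

Definition graph_iso (n : nat) (e1 e2 : rel 'I_n) : Prop :=
  exists f : {perm 'I_n}, forall x y, e1 x y = e2 (f x) (f y).

(* K^{s,t}_n, n = s+t-1: vertices 0..s-1 form K_s, vertices 0 and s..n-1
   form K_t; vertex 0 is the identified vertex. *)
Definition Kst (s t : nat) : rel 'I_(s + t - 1) :=
  fun i j => (i != j) &&
    (((i < s) && (j < s))%N ||
     (((val i == 0) || (s <= i)) && ((val j == 0) || (s <= j)))%N).
Arguments Kst s t : clear implicits.

From mathcomp Require Import all_boot all_order fingroup perm all_algebra.
From mathcomp Require Import algC spectral sesquilinear ring zify.
Set Implicit Arguments. Unset Strict Implicit. Unset Printing Implicit Defensive.
Import GRing.Theory Num.Theory Order.TTheory.

(* Distance matrices are real symmetric, hence unitarily diagonalizable, so the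
   D-spectrum determines the rank of D + I and the traces of its powers. For
   K^{s,t}_n, D + I = J + [u, v lie in different cliques, neither being the cut
   vertex] factors through three columns, so a cospectral graph G has
   rank (D(G) + I) <= 3: no four vertices of G span a nonsingular principal
   4 x 4 submatrix of D + I. Explicit integer inverses then rule out a geodesic
   of length 3 (so G has diameter 2) and the configurations K3+K1, paw, P4 and
   2K2 in the graph of pairs at distance 2. Hence the pairs at distance 2 are
   exactly those between two disjoint sets A and B, and D(G) + I has the same
   shape as for K^{s,t}_n. Finally tr ((D + I)^2) = n^2 + 6|A||B| and
   tr ((D + I)^3) determine |A||B| and |A| + |B|, hence
   {|A|, |B|} = {s - 1, t - 1}. *)

Section GraphDistance.
Variables (T : finType) (e : rel T).

Lemma in_ballS u k z :
  (z \in ball e u k.+1) = (z \in ball e u k) || [exists x in ball e u k, e x z].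
Proof. by rewrite /= !inE. Qed.

Lemma in_ball0 u v : (v \in ball e u 0) = (v == u).
Proof. by rewrite /= inE. Qed.

Lemma ball_subS u k : ball e u k \subset ball e u k.+1.
Proof. exact: subsetUl. Qed.

Lemma ball_sub u k m : (k <= m)%N -> ball e u k \subset ball e u m.
Proof.
move=> /subnK <-; elim: (m - k)%N => // d IH.
by rewrite addSn (subset_trans IH) // ball_subS.
Qed.

Lemma ball_step u k y z : y \in ball e u k -> e y z -> z \in ball e u k.+1.
Proof.
by move=> yb eyz; rewrite in_ballS; apply/orP; right; apply/existsP; exists y; rewrite yb.
Qed.

Lemma ball_trans u v w i j :
  v \in ball e u i -> w \in ball e v j -> w \in ball e u (i + j).
Proof.
move=> vb; elim: j w => [|j IH] w; first by rewrite in_ball0 addn0 => /eqP ->.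
rewrite in_ballS addnS => /orP[/IH|/existsP[x /andP[/IH xb exw]]].
  exact: (subsetP (ball_subS _ _)).
exact: ball_step xb exw.
Qed.

Lemma ball1 u v : e u v -> v \in ball e u 1.
Proof. by apply: ball_step; rewrite in_ball0. Qed.

Lemma path_in_ball u p : path e u p -> last u p \in ball e u (size p).
Proof.
elim: p u => [|x p IH] u; first by rewrite in_ball0.
by case/andP=> /ball1 eux /IH; apply: ball_trans eux.
Qed.

Hypothesis e_connected : forall u v, connect e u v.

Lemma connect_in_ball u v : v \in ball e u #|T|.-1.
Proof.
have /connectP[p pp ->] := e_connected u v.
case/shortenP: pp => p' pp' up' _.
apply: (subsetP (ball_sub _ _)) (path_in_ball pp').
by move: (max_card (mem (u :: p'))); rewrite (card_uniqP up') /=; case: #|T|.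
Qed.

Lemma leq_dist u v k : (dist e u v <= k)%N = (v \in ball e u k).
Proof.
rewrite /dist; set P := fun k => v \in ball e u k.
have T_gt0 : (0 < #|T|)%N by apply/card_gt0P; exists u.
have hasP : has P (iota 0 #|T|).
  apply/hasP; exists #|T|.-1; last exact: connect_in_ball.
  by rewrite mem_iota add0n prednK // leqnn.
have find_lt := hasP; rewrite has_find size_iota in find_lt.
have Pd : P (find P (iota 0 #|T|)) by have := nth_find 0 hasP; rewrite nth_iota.
apply/idP/idP => [le|Pk]; first exact: (subsetP (ball_sub _ le)) Pd.
rewrite leqNgt; apply/negP => lt.
by have := before_find 0 lt; rewrite nth_iota ?(ltn_trans lt) // add0n /P Pk.
Qed.

Lemma dist_eq0 u v : (dist e u v == 0%N) = (u == v).
Proof. by rewrite -leqn0 leq_dist in_ball0 eq_sym. Qed.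

Lemma dist_gt0 u v : (0 < dist e u v)%N = (u != v).
Proof. by rewrite lt0n dist_eq0. Qed.

Lemma distxx u : dist e u u = 0%N.
Proof. by apply/eqP; rewrite dist_eq0. Qed.

Lemma dist_triangle u v w : (dist e u w <= dist e u v + dist e v w)%N.
Proof. by rewrite leq_dist; apply: (@ball_trans _ v); rewrite -leq_dist. Qed.

Lemma dist_eq1 u v : u != v -> (dist e u v == 1%N) = e u v.
Proof.
move=> neq; apply/idP/idP => [/eqP d1|euv].
  have : v \in ball e u 1 by rewrite -leq_dist d1.
  rewrite in_ballS in_ball0 eq_sym (negPf neq) /= => /existsP[x /andP[]].
  by rewrite in_ball0 => /eqP ->.
by rewrite eqn_leq leq_dist ball1 // dist_gt0.
Qed.

Lemma dist_edge u v w : e v w -> (dist e u w <= (dist e u v).+1)%N.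
Proof.
move=> evw; apply: leq_trans (dist_triangle u v w) _.
by rewrite -addn1 leq_add2l leq_dist ball1.
Qed.

Lemma dist_predecessor u v k :
  dist e u v = k.+1 -> exists2 y, dist e u y = k & e y v.
Proof.
move=> dk; have : v \in ball e u k.+1 by rewrite -leq_dist dk.
rewrite in_ballS -leq_dist dk ltnn /= => /existsP[y /andP[yb eyv]].
exists y; last exact: eyv.
apply/eqP; rewrite eqn_leq leq_dist yb andTb.
by have := dist_edge u eyv; rewrite dk ltnS.
Qed.

Lemma dist_intermediate u v k : (k <= dist e u v)%N -> exists w, dist e u w = k.
Proof.
have [m dm] : exists m, dist e u v = m by eexists.
rewrite dm; elim: m v dm => [|m IH] v dm; first by rewrite leqn0 => /eqP->; exists v.
rewrite leq_eqVlt ltnS => /orP[/eqP->|]; first by exists v.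
by have [y dy _] := dist_predecessor dm; apply: IH dy.
Qed.

Hypothesis e_sym : symmetric e.

Lemma ball_sym u v k : v \in ball e u k -> u \in ball e v k.
Proof.
elim: k v => [|k IH] v; first by rewrite !in_ball0 eq_sym.
rewrite in_ballS => /orP[/IH|/existsP[y /andP[/IH yb eyv]]].
  exact: (subsetP (ball_subS _ _)).
by rewrite -add1n; apply: ball_trans yb; rewrite ball1 // e_sym.
Qed.

Lemma dist_sym u v : dist e u v = dist e v u.
Proof.
by apply/eqP; rewrite eqn_leq !leq_dist; apply/andP; split; apply: ball_sym; rewrite -leq_dist.
Qed.

End GraphDistance.

Lemma perm_eq_map_ord (U : eqType) N (f g : 'I_N -> U) :
  perm_eq [seq f i | i <- enum 'I_N] [seq g i | i <- enum 'I_N] ->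
  exists p : {perm 'I_N}, forall i, f i = g (p i).
Proof.
move=> /(@tuple_permP _ _ _ [tuple g i | i < N])[p fgp]; exists p => i.
have /(congr1 (nth (f i) ^~ i)) := fgp.
by rewrite !(nth_map i) -?enumT ?size_enum_ord // nth_ord_enum tnth_mktuple.
Qed.

Section MembershipPairs.
Variables (N : nat) (A B : {set 'I_N}).
Hypothesis AB_disjoint : [disjoint A & B].

Definition membership (x : 'I_N) := (x \in A, x \in B).

Lemma count_membership a b :
  count_mem (a, b) [seq membership x | x <- enum 'I_N] =
  match a, b with
  | true, true => 0 | true, false => #|A| | false, true => #|B|
  | false, false => N - (#|A| + #|B|) end.
Proof.
rewrite count_map enumT -size_filter -cardE /membership; case: a b => [] [].
- apply: eq_card0 => x; rewrite unfold_in /= !eqb_id.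
  by apply/andP => -[/(disjointFr AB_disjoint) ->].
- apply: eq_card => x; rewrite unfold_in /= eqb_id eqbF_neg.
  by case: (boolP (x \in A)) => // /(disjointFr AB_disjoint) ->.
- apply: eq_card => x; rewrite unfold_in /= eqb_id eqbF_neg andbC.
  by case: (boolP (x \in B)) => // /(disjointFl AB_disjoint) ->.
transitivity #|~: (A :|: B)|.
  by apply: eq_card => x; rewrite unfold_in !inE /= !eqbF_neg negb_or.
by rewrite cardsCs setCK card_ord cardsU (disjoint_setI0 AB_disjoint) cards0 subn0.
Qed.
End MembershipPairs.

Lemma relabel_disjoint_pairs N (A B A' B' : {set 'I_N}) :
  [disjoint A & B] -> [disjoint A' & B'] -> #|A| = #|A'| -> #|B| = #|B'| ->
  exists p : {perm 'I_N}, forall x, (x \in A) = (p x \in A') /\ (x \in B) = (p x \in B').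
Proof.
move=> AB A'B' cardA cardB.
have [p mp] : exists p : {perm 'I_N}, forall x, membership A B x = membership A' B' (p x).
  apply: perm_eq_map_ord; apply/allP => -[a b] _ /=.
  by apply/eqP; rewrite !count_membership // cardA cardB.
by exists p => x; case: (mp x) => -> ->.
Qed.

Local Open Scope ring_scope.

Section Similarity.
Variables (R : comUnitRingType) (n : nat) (P : 'M[R]_n).
Hypothesis P_unit : P \in unitmx.

Lemma char_poly_similar A : char_poly (invmx P *m A *m P) = char_poly A.
Proof.
rewrite /char_poly /char_poly_mx.
have -> : 'X%:M - map_mx polyC (invmx P *m A *m P) =
   map_mx polyC (invmx P) *m ('X%:M - map_mx polyC A) *m map_mx polyC P.
  rewrite mulmxBr mulmxBl mul_mx_scalar -scalemxAl -!map_mxM mulVmx //.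
  by rewrite map_mx1 scalemx1.
rewrite !det_mulmx mulrC mulrA -det_mulmx -map_mxM mulmxV //.
by rewrite map_mx1 det1 mul1r.
Qed.

Lemma exp_similar A k : (invmx P *m A *m P) ^+ k = invmx P *m A ^+ k *m P.
Proof.
elim: k => [|k IH]; first by rewrite !expr0 -idmxE mulmx1 mulVmx.
by rewrite !exprS IH -!mulmxE !mulmxA mulmxK.
Qed.

Lemma trace_similar A : \tr (invmx P *m A *m P) = \tr A.
Proof. by rewrite mxtrace_mulC mulmxA mulmxV // mul1mx. Qed.

End Similarity.

Lemma rank_similar (F : fieldType) n (P A : 'M[F]_n) : P \in unitmx ->
  \rank (invmx P *m A *m P) = \rank A.
Proof.
by move=> P_unit; rewrite mxrankMfree ?row_free_unit // eqmxMfull // row_full_unit unitmx_inv.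
Qed.

Lemma rank_diag_mx (F : fieldType) n (d : 'rV[F]_n) :
  \rank (diag_mx d) = (\sum_i (d 0%R i != 0%R))%N.
Proof.
elim: n d => [|n IH] d; first by rewrite flatmx0 mxrank0 big_ord0.
pose l := @lsubmx _ 1 1 n d; pose r := @rsubmx _ 1 1 n d.
have -> : \rank (diag_mx d) = (\rank (diag_mx l) + \rank (diag_mx r))%N.
  by rewrite -rank_diag_block_mx -diag_mx_row hsubmxK.
rewrite IH (@big_split_ord _ _ _ 1 n) /=.
congr (_ + _)%N; last by apply: eq_bigr => i _; rewrite mxE.
rewrite big_ord1 rank_rV; congr (nat_of_bool (~~ _)).
apply/eqP/eqP => [/matrixP/(_ 0 0)|d0]; first by rewrite !mxE eqxx mulr1n.
by apply/matrixP => i j; rewrite !ord1 !mxE eqxx mulr1n d0.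
Qed.

Lemma diag_mx_exp (R : pzRingType) n (d : 'rV[R]_n) k :
  diag_mx d ^+ k = diag_mx (\row_i (d 0 i ^+ k)).
Proof.
elim: k => [|k IH].
  by apply/matrixP => i j; rewrite expr0 -idmxE !mxE expr0.
rewrite exprS IH -mulmxE mulmx_diag; congr diag_mx.
by apply/rowP => i; rewrite !mxE exprS.
Qed.

Section NormalSpectrum.
Variables (C : numClosedFieldType) (n : nat).
Implicit Types (A : 'M[C]_n) (c : C).

Definition spectrum A : seq C := [seq spectral_diag A 0 i | i <- index_enum 'I_n].

Lemma normal_shift_spectral A c : A \is normalmx ->
  A + c%:M =
  invmx (spectralmx A) *m diag_mx (spectral_diag A + const_mx c) *m spectralmx A.
Proof.
move=> /orthomx_spectralP {1}->; rewrite raddfD /= diag_const_mx mulmxDr mulmxDl.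
by rewrite mul_mx_scalar -scalemxAl mulVmx ?spectral_unit // scalemx1.
Qed.

Lemma char_poly_normal A : A \is normalmx ->
  char_poly A = \prod_(x <- spectrum A) ('X - x%:P).
Proof.
move=> /orthomx_spectralP {1}->; rewrite char_poly_similar ?spectral_unit //.
rewrite char_poly_trig ?diag_mx_is_trig // big_map.
by apply: eq_bigr => i _; rewrite mxE eqxx mulr1n.
Qed.

Lemma rank_normal_shift A c : A \is normalmx ->
  \rank (A + c%:M)%R = count (fun x => x + c != 0) (spectrum A).
Proof.
move=> A_normal; rewrite normal_shift_spectral // rank_similar ?spectral_unit //.
rewrite rank_diag_mx count_map -sum1_count [RHS]big_mkcond.
by apply: eq_bigr => i _; rewrite !mxE /=; case: (_ != 0).
Qed.

Lemma trace_normal_shift_exp A c k : A \is normalmx ->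
  \tr ((A + c%:M) ^+ k) = \sum_(x <- spectrum A) (x + c) ^+ k.
Proof.
move=> A_normal; rewrite normal_shift_spectral // exp_similar ?spectral_unit //.
rewrite trace_similar ?spectral_unit // diag_mx_exp mxtrace_diag big_map.
by apply: eq_bigr => i _; rewrite !mxE.
Qed.

Section Cospectral.
Variables A B : 'M[C]_n.
Hypotheses (A_normal : A \is normalmx) (B_normal : B \is normalmx).
Hypothesis AB_cospectral : char_poly A = char_poly B.

Lemma cospectral_perm_spectrum : perm_eq (spectrum A) (spectrum B).
Proof. by apply: prod_XsubC_eq; rewrite -!char_poly_normal. Qed.

Lemma cospectral_rank_shift c : \rank (A + c%:M)%R = \rank (B + c%:M)%R.
Proof. by rewrite !rank_normal_shift //; apply/seq.permP/cospectral_perm_spectrum. Qed.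

Lemma cospectral_trace_shift_exp c k :
  \tr ((A + c%:M) ^+ k) = \tr ((B + c%:M) ^+ k).
Proof. by rewrite !trace_normal_shift_exp //; apply/perm_big/cospectral_perm_spectrum. Qed.

End Cospectral.

End NormalSpectrum.

Lemma trace_mulmx_exp (R : comPzRingType) m n (X : 'M[R]_(m, n)) (Y : 'M[R]_(n, m)) k :
  \tr ((X *m Y) ^+ k.+1) = \tr ((Y *m X) ^+ k.+1).
Proof.
have XY_exp : (X *m Y) ^+ k.+1 = X *m (Y *m X) ^+ k *m Y.
  elim: k => [|k IH]; first by rewrite expr1 expr0 -idmxE mulmx1.
  by rewrite exprS IH [in RHS]exprS -!mulmxE !mulmxA.
by rewrite XY_exp mxtrace_mulC mulmxA mulmxE -exprS.
Qed.

Lemma sum_indicator (R : pzSemiRingType) (T : finType) (S : {set T}) :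
  \sum_i ((i \in S)%:R : R) = #|S|%:R.
Proof.
by rewrite -sum1_card natr_sum [RHS]big_mkcond; apply: eq_bigr => i _; case: (i \in S).
Qed.

Section CrossMatrix.
Variables (N : nat) (A B : {set 'I_N}).
Hypothesis AB_disjoint : [disjoint A & B].

Definition cross (i j : 'I_N) : bool :=
  (i \in A) && (j \in B) || (i \in B) && (j \in A).

Lemma cross_sym i j : cross i j = cross j i.
Proof. by rewrite /cross orbC; congr (_ || _); apply: andbC. Qed.

Definition cross_mx : 'M[algC]_N := \matrix_(i, j) (1 + (cross i j)%:R).

Definition cross_lfactor : 'M[algC]_(N, 3) :=
  \matrix_(i, c) (i \in nth set0 [:: setT; A; B] c)%:R.
Definition cross_rfactor : 'M[algC]_(3, N) :=
  \matrix_(c, j) (j \in nth set0 [:: setT; B; A] c)%:R.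

Lemma cross_mx_factor : cross_mx = cross_lfactor *m cross_rfactor.
Proof.
apply/matrixP => i j; rewrite !mxE !big_ord_recl big_ord0 !mxE /= !inE /cross.
have [iA|iA] := boolP (i \in A); have [jA|jA] := boolP (j \in A);
  rewrite ?(disjointFr AB_disjoint iA) ?(disjointFr AB_disjoint jA) /=;
  by case: (i \in B); case: (j \in B); rewrite /= ?(mul0r, mul1r, addr0, add0r).
Qed.

Lemma rank_cross_mx : (\rank cross_mx <= 3)%N.
Proof. by rewrite cross_mx_factor (leq_trans (mxrankM_maxl _ _)) ?rank_leq_col. Qed.

Lemma cross_gramE : cross_rfactor *m cross_lfactor =
  \matrix_(r, c) #|nth set0 [:: setT; B; A] r :&: nth set0 [:: setT; A; B] c|%:R.
Proof.
apply/matrixP => r c; rewrite !mxE -sum_indicator.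
by apply: eq_bigr => j _; rewrite !mxE -natrM mulnb inE.
Qed.

Lemma trace_cross_mx2 :
  \tr (cross_mx ^+ 2) = N%:R ^+ 2 + 6 * #|A|%:R * #|B|%:R.
Proof.
rewrite cross_mx_factor (trace_mulmx_exp _ _ 1) cross_gramE expr2 -mulmxE.
rewrite /mxtrace !(big_ord_recl, big_ord0, mxE) /=.
rewrite [B :&: A]setIC (disjoint_setI0 AB_disjoint) !(setTI, setIT, setIid).
rewrite cards0 cardsT card_ord.
ring.
Qed.

Lemma trace_cross_mx3 : \tr (cross_mx ^+ 3) =
  N%:R ^+ 3 + 6 * N%:R * #|A|%:R * #|B|%:R
  + 3 * #|A|%:R * #|B|%:R * (#|A|%:R + #|B|%:R).
Proof.
rewrite cross_mx_factor (trace_mulmx_exp _ _ 2) cross_gramE exprS expr2 -!mulmxE.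
rewrite /mxtrace !(big_ord_recl, big_ord0, mxE) /=.
rewrite [B :&: A]setIC (disjoint_setI0 AB_disjoint) !(setTI, setIT, setIid).
rewrite cards0 cardsT card_ord.
ring.
Qed.

End CrossMatrix.

Lemma crossC N (A B : {set 'I_N}) u v : cross A B u v = cross B A u v.
Proof. exact: orbC. Qed.

Lemma mxrank_mxsub (F : fieldType) m n m' n' (f : 'I_m' -> 'I_m) (g : 'I_n' -> 'I_n)
  (A : 'M[F]_(m, n)) : (\rank (mxsub f g A) <= \rank A)%N.
Proof.
have -> : mxsub f g A = rowsub f 1%:M *m colsub g A by rewrite -mxsub_mul mul1mx.
have -> : colsub g A = A *m colsub g 1%:M by rewrite mulmx_colsub mulmx1.
by rewrite (leq_trans (mxrankM_maxr _ _)) ?mxrankM_maxl.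
Qed.

Lemma mxrank_int_invertible (F : numFieldType) n (Q C : 'M[int]_n) (c : int) :
  c != 0 -> C *m Q = c%:M -> \rank (map_mx (intr : int -> F) Q) = n.
Proof.
move=> c_neq0 CQ; apply/eqP; rewrite eqn_leq rank_leq_row /=.
have := mxrankM_maxr (map_mx (intr : int -> F) C) (map_mx intr Q).
by rewrite -map_mxM CQ map_scalar_mx -scalemx1 mxrank_scale_nz ?mxrank1 ?intr_eq0.
Qed.

Definition distI_mx N (e : rel 'I_N) : 'M[algC]_N := map_mx intr (distmx e) + 1%:M.

Lemma distI_mxE N (e : rel 'I_N) i j : distI_mx e i j = (dist e i j + (i == j))%:R.
Proof. by rewrite !mxE -pmulrn natrD. Qed.

Definition quad_mx (d01 d02 d03 d12 d13 d23 : nat) : 'M[int]_4 :=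
  \matrix_(i, j) (if i == j then 1 else
     match minn i j, maxn i j with
     | 0, 1 => d01 | 0, 2 => d02 | 0, _ => d03
     | 1, 2 => d12 | 1, _ => d13 | _, _ => d23 end)%N%:Z.

Section RankAtMostThree.
Variables (N : nat) (e : rel 'I_N).
Hypotheses (e_sym : symmetric e) (e_connected : forall u v, connect e u v).
Hypothesis rank_le3 : (\rank (distI_mx e) <= 3)%N.

Lemma dist_pos_neq u v d : dist e u v = d -> (0 < d)%N -> (u == v) = false.
Proof. by move=> <-; rewrite dist_gt0 // => /negPf. Qed.

Lemma no_invertible_quad (a0 a1 a2 a3 : 'I_N) d01 d02 d03 d12 d13 d23 C (c : int) :
  c != 0 -> C *m quad_mx d01 d02 d03 d12 d13 d23 = c%:M ->
  dist e a0 a1 = d01 -> dist e a0 a2 = d02 -> dist e a0 a3 = d03 ->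
  dist e a1 a2 = d12 -> dist e a1 a3 = d13 -> dist e a2 a3 = d23 ->
  (0 < d01)%N -> (0 < d02)%N -> (0 < d03)%N ->
  (0 < d12)%N -> (0 < d13)%N -> (0 < d23)%N -> False.
Proof.
move=> c_neq0 CQ d01E d02E d03E d12E d13E d23E d01P d02P d03P d12P d13P d23P.
pose a (p : 'I_4) := nth a0 [:: a0; a1; a2; a3] p.
have quadE : mxsub a a (distI_mx e) = map_mx intr (quad_mx d01 d02 d03 d12 d13 d23).
  apply/matrixP => p q; rewrite [LHS]mxE distI_mxE !mxE.
  wlog le_pq : p q / (p <= q)%N => [sym|].
    have [/sym //|] := boolP (p <= q)%N; rewrite -ltnNge => /ltnW/sym.
    by rewrite dist_sym // [a q == a p]eq_sym [q == p]eq_sym minnC maxnC.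
  case: p q le_pq => [[|[|[|[|//]]]] ?] [[|[|[|[|//]]]] ?] //= _;
    rewrite /a /= ?distxx ?eqxx //;
  by rewrite ?(dist_pos_neq d01E, dist_pos_neq d02E, dist_pos_neq d03E,
     dist_pos_neq d12E, dist_pos_neq d13E, dist_pos_neq d23E) //
     ?(d01E, d02E, d03E, d12E, d13E, d23E) addn0 pmulrn.
have := mxrank_mxsub a a (distI_mx e).
by rewrite quadE (mxrank_int_invertible _ c_neq0 CQ) => /leq_trans/(_ rank_le3).
Qed.

End RankAtMostThree.

(* Certificates C * Q = c%:M, c != 0, showing that the D + I patterns of four
   vertices forming a geodesic of length 3, or whose pairs at distance 2 form
   K3+K1, a paw, a P4 or 2K2, are nonsingular. *)
Definition mx4_of_rows (l : seq (seq int)) : 'M[int]_4 :=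
  \matrix_(i, j) nth 0 (nth [::] l i) j.

Ltac mx4_compute := apply/matrixP;
  case=> [[|[|[|[|?]]]] ?] //; case=> [[|[|[|[|?]]]] ?] //;
  rewrite !mxE !big_ord_recl big_ord0 !mxE.

Lemma geodesic3_quad_inverse :
  mx4_of_rows [:: [:: -1; 1; 2; -1]; [:: 1; -1; -3; 2]; [:: 2; -3; -1; 1]; [:: -1; 2; 1; -1]]
  *m quad_mx 1 2 3 1 2 1 = 1%:M.
Proof. by mx4_compute. Qed.

Lemma far_K3K1_quad_inverse :
  mx4_of_rows [:: [:: -1; 1; 1; -1]; [:: 1; -1; 1; -1]; [:: 1; 1; -1; -1]; [:: -1; -1; -1; 5]]
  *m quad_mx 2 2 1 2 1 1 = 2%:M.
Proof. by mx4_compute. Qed.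

Lemma far_paw_quad_inverse :
  mx4_of_rows [:: [:: 0; 3; 0; -3]; [:: 3; 0; 0; -3]; [:: 0; 0; -1; 2]; [:: -3; -3; 2; 5]]
  *m quad_mx 2 2 1 2 1 2 = 3%:M.
Proof. by mx4_compute. Qed.

Lemma far_P4_quad_inverse :
  mx4_of_rows [:: [:: 0; 3; 0; -3]; [:: 3; -1; -1; 0]; [:: 0; -1; -1; 3]; [:: -3; 0; 3; 0]]
  *m quad_mx 2 1 1 2 1 2 = 3%:M.
Proof. by mx4_compute. Qed.

Lemma far_2K2_quad_inverse :
  mx4_of_rows [:: [:: -1; 4; -1; -1]; [:: 4; -1; -1; -1]; [:: -1; -1; -1; 4]; [:: -1; -1; 4; -1]]
  *m quad_mx 2 1 1 1 1 2 = 5%:M.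
Proof. by mx4_compute. Qed.

Section FarPairs.
Variables (N : nat) (e : rel 'I_N).
Hypotheses (e_sym : symmetric e) (e_irr : irreflexive e).
Hypothesis e_connected : forall u v, connect e u v.
Hypothesis rank_le3 : (\rank (distI_mx e) <= 3)%N.

Let no_quad := no_invertible_quad e_sym e_connected rank_le3.

Lemma edge_dist u v : e u v -> dist e u v = 1%N.
Proof.
move=> euv; apply/eqP; rewrite dist_eq1 //.
by apply: contraTneq euv => ->; rewrite e_irr.
Qed.

Lemma dist_le2 u v : (dist e u v <= 2)%N.
Proof.
rewrite leqNgt; apply/negP => /(dist_intermediate e_connected)[{}v d3].
have [y dy eyv] := dist_predecessor e_connected d3.
have [x dx exy] := dist_predecessor e_connected dy.
have dxv : dist e x v = 2%N.
  apply/eqP; rewrite eqn_leq; apply/andP; split.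
    by have := dist_edge e_connected x eyv; rewrite (edge_dist exy).
  by have := dist_triangle e_connected u x v; rewrite dx d3.
by apply: (no_quad _ geodesic3_quad_inverse dx dy d3 (edge_dist exy) dxv (edge_dist eyv)).
Qed.

Definition far u v := dist e u v == 2%N.

Lemma far_sym u v : far u v = far v u.
Proof. by rewrite /far dist_sym. Qed.

Lemma far_dist u v : far u v -> dist e u v = 2%N.
Proof. by move/eqP. Qed.

Lemma near_dist u v : u != v -> ~~ far u v -> dist e u v = 1%N.
Proof.
rewrite -(dist_gt0 e_connected) /far; have := dist_le2 u v.
by case: (dist e u v) => [|[|[|]]].
Qed.

Lemma edgeE u v : e u v = (u != v) && ~~ far u v.
Proof.
have [->|neq] := eqVneq u v; first by rewrite e_irr.
rewrite -(dist_eq1 e_connected neq) /far /=; have := dist_le2 u v.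
by rewrite -(dist_gt0 e_connected) in neq; case: (dist e u v) neq => [|[|[|]]].
Qed.

Lemma far_triangle_free x y z : far x y -> far y z -> far x z -> False.
Proof.
move=> fxy fyz fxz.
have [w dxw ewy] := dist_predecessor e_connected (far_dist fxy).
have dyw : dist e y w = 1%N by rewrite dist_sym // edge_dist.
have nzw : z != w by apply: contraTneq fxz => ->; rewrite /far dxw.
have [fzw|nfzw] := boolP (far z w).
  by apply: (no_quad _ far_paw_quad_inverse (far_dist fxy) (far_dist fxz) dxw
    (far_dist fyz) dyw (far_dist fzw)).
by apply: (no_quad _ far_K3K1_quad_inverse (far_dist fxy) (far_dist fxz) dxw
  (far_dist fyz) dyw (near_dist nzw nfzw)).
Qed.

Lemma far_path3 x y u v : far x y -> far y u -> far u v -> far x v.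
Proof.
move=> fxy fyu fuv; apply/negPn/negP => nfxv.
have nfxu : ~~ far x u by apply/negP => /(far_triangle_free fxy fyu).
have nfyv : ~~ far y v by apply/negP => /(far_triangle_free fyu fuv).
have nxu : x != u by apply: contraNneq nfxv => ->.
have nyv : y != v by apply: contraNneq nfxv => <-.
have nxv : x != v by apply: contraNneq nfxu => ->; rewrite far_sym.
by apply: (no_quad _ far_P4_quad_inverse (far_dist fxy) (near_dist nxu nfxu)
  (near_dist nxv nfxv) (far_dist fyu) (near_dist nyv nfyv) (far_dist fuv)).
Qed.

Lemma far_far_neighbours x y a b : far x y -> far y a -> far x b -> far a b.
Proof.
move=> fxy fya; rewrite far_sym in fxy; rewrite far_sym in fya.
exact: far_path3 fya fxy.
Qed.

Lemma far_2K2_free x y u v : far x y -> far u v ->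
  ~~ far x u -> ~~ far y u -> ~~ far x v -> ~~ far y v -> False.
Proof.
move=> fxy fuv nfxu nfyu nfxv nfyv.
have nxu : x != u by apply: contraNneq nfxv => ->.
have nxv : x != v by apply: contraNneq nfxu => ->; rewrite far_sym.
have nyu : y != u by apply: contraNneq nfyv => ->.
have nyv : y != v by apply: contraNneq nfyu => ->; rewrite far_sym.
by apply: (no_quad _ far_2K2_quad_inverse (far_dist fxy) (near_dist nxu nfxu)
  (near_dist nxv nfxv) (near_dist nyu nfyu) (near_dist nyv nfyv) (far_dist fuv)).
Qed.

Lemma far_cross : exists A B : {set 'I_N},
  [disjoint A & B] /\ forall u v, far u v = cross A B u v.
Proof.
have [/existsP[x /existsP[y fxy]]|no_far] := boolP [exists x, exists y, far x y]; last first.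
  exists set0, set0; split => [|u v]; first by rewrite -setI_eq0 set0I.
  rewrite /cross !inE; apply: contraNF no_far => fuv.
  by apply/existsP; exists u; apply/existsP; exists v.
exists [set v | far y v], [set v | far x v]; split => [|u v].
  rewrite disjoint_subset; apply/subsetP => v; rewrite !inE => fyv.
  by apply/negP => /(far_triangle_free fxy fyv).
rewrite /cross !inE; apply/idP/idP => [fuv|/orP[]/andP[]]; last 2 first.
- exact: far_far_neighbours fxy.
- by rewrite far_sym in fxy; apply: far_far_neighbours fxy.
have [fyu|nfyu] := boolP (far y u); first by rewrite (far_path3 fxy fyu fuv).
have [fxu|nfxu] := boolP (far x u).
  by rewrite far_sym in fxy; rewrite (far_path3 fxy fxu fuv) orbT.
rewrite far_sym in fuv.
have [fyv|nfyv] := boolP (far y v); first by rewrite (far_path3 fxy fyv fuv) in nfxu.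
have [fxv|nfxv] := boolP (far x v).
  by rewrite far_sym in fxy; rewrite (far_path3 fxy fxv fuv) in nfyu.
by rewrite far_sym in fuv; case: (far_2K2_free fxy fuv nfxu nfyu nfxv nfyv).
Qed.

End FarPairs.

Lemma distmx_normal N (e : rel 'I_N) : symmetric e -> (forall u v, connect e u v) ->
  map_mx (intr : int -> algC) (distmx e) \is normalmx.
Proof.
move=> e_sym e_connected; apply: symmetric_normalmx; last first.
  by apply/mxOverP => i j; rewrite mxE realz.
apply/is_hermitianmxP; rewrite expr0 scale1r map_mx_id // map_trmx.
by congr map_mx; apply/matrixP => i j; rewrite !mxE dist_sym.
Qed.

Lemma cospectral_distI_mx N (e1 e2 : rel 'I_N) :
  symmetric e1 -> (forall u v, connect e1 u v) ->
  symmetric e2 -> (forall u v, connect e2 u v) -> D_cospectral e1 e2 ->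
  \rank (distI_mx e1) = \rank (distI_mx e2) /\
  forall k, \tr (distI_mx e1 ^+ k) = \tr (distI_mx e2 ^+ k).
Proof.
move=> sym1 conn1 sym2 conn2 cosp.
have normal1 := distmx_normal sym1 conn1; have normal2 := distmx_normal sym2 conn2.
have cosp' : char_poly (map_mx intr (distmx e1)) =
              char_poly (map_mx (intr : int -> algC) (distmx e2)).
  by rewrite -!map_char_poly cosp.
split; first exact: cospectral_rank_shift.
by move=> k; apply: cospectral_trace_shift_exp.
Qed.

Lemma distI_mx_cross N (e : rel 'I_N) (A B : {set 'I_N}) :
  (forall u v, connect e u v) -> (forall u v, dist e u v <= 2)%N ->
  (forall u v, e u v = (u != v) && ~~ cross A B u v) -> [disjoint A & B] ->
  distI_mx e = cross_mx A B.
Proof.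
move=> e_connected dist_le2 eE AB; apply/matrixP => u v; rewrite distI_mxE mxE.
have [<-|neq] := eqVneq u v.
  have cross_uu : cross A B u u = false.
    by rewrite /cross andbC orbb; apply/negbTE/negP => /andP[/(disjointFl AB) ->].
  by rewrite distxx // cross_uu addr0.
have := dist_le2 u v; have := dist_eq1 e_connected neq; rewrite eE neq.
rewrite -(dist_gt0 e_connected) in neq.
case: (dist e u v) neq => [|[|[|]]] //= _;
  by case: (cross A B u v) => //= _ _; rewrite addn0 addr0.
Qed.

Lemma cross_graph_iso N (e e' : rel 'I_N) (A B A' B' : {set 'I_N}) :
  [disjoint A & B] -> [disjoint A' & B'] -> #|A| = #|A'| -> #|B| = #|B'| ->
  (forall u v, e u v = (u != v) && ~~ cross A B u v) ->
  (forall u v, e' u v = (u != v) && ~~ cross A' B' u v) -> graph_iso e e'.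
Proof.
move=> AB A'B' cardA cardB eE e'E.
have [p p_mem] := relabel_disjoint_pairs AB A'B' cardA cardB.
exists p => x y; rewrite eE e'E (inj_eq perm_inj) /cross.
by case: (p_mem x) => -> ->; case: (p_mem y) => -> ->.
Qed.

Lemma cross_mx_traces_cards N (A B A' B' : {set 'I_N}) :
  [disjoint A & B] -> [disjoint A' & B'] -> (0 < #|A'|)%N -> (0 < #|B'|)%N ->
  \tr (cross_mx A B ^+ 2) = \tr (cross_mx A' B' ^+ 2) ->
  \tr (cross_mx A B ^+ 3) = \tr (cross_mx A' B' ^+ 3) ->
  #|A| = #|A'| /\ #|B| = #|B'| \/ #|A| = #|B'| /\ #|B| = #|A'|.
Proof.
move=> AB A'B' A'_gt0 B'_gt0.
rewrite !trace_cross_mx2 // !trace_cross_mx3 // -!natrX -!natrM -!natrD -!natrM -!natrD.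
move=> /eqP; rewrite eqr_nat => /eqP tr2 /eqP; rewrite eqr_nat => /eqP tr3.
have prodE : (#|A| * #|B| = #|A'| * #|B'|)%N by nia.
have sumE : (#|A| + #|B| = #|A'| + #|B'|)%N by nia.
nia.
Qed.

Section Kst.
Variables (s t : nat).
Local Notation n := (s + t - 1)%N.

Definition Kst_left : {set 'I_n} := [set i : 'I_n | (0 < i < s)%N].
Definition Kst_right : {set 'I_n} := [set i : 'I_n | (s <= i)%N].

Lemma Kst_disjoint : [disjoint Kst_left & Kst_right].
Proof. by rewrite -setI_eq0; apply/eqP/setP => i; rewrite !inE; lia. Qed.

Lemma KstE u v : Kst s t u v = (u != v) && ~~ cross Kst_left Kst_right u v.
Proof.
rewrite /Kst /cross !inE; congr (_ && _).
by case: u v => u Hu [v Hv] /=; lia.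
Qed.

Lemma Kst_sym : symmetric (Kst s t).
Proof. by move=> u v; rewrite !KstE eq_sym cross_sym. Qed.

Hypotheses (s_ge2 : (2 <= s)%N) (t_ge2 : (2 <= t)%N).

Lemma Kst_order_gt0 : (0 < n)%N.
Proof. lia. Qed.

Definition Kst_center : 'I_n := Ordinal Kst_order_gt0.

Lemma Kst_center_adj v : v != Kst_center -> Kst s t Kst_center v.
Proof. by move=> nv; rewrite /Kst eq_sym nv /=; lia. Qed.

Lemma Kst_connected u v : connect (Kst s t) u v.
Proof.
have center_connect w : connect (Kst s t) Kst_center w.
  by have [->|/Kst_center_adj/connect1] := eqVneq w Kst_center.
apply: connect_trans (center_connect v).
have [->|/Kst_center_adj] := eqVneq u Kst_center; first exact: connect0.
by rewrite Kst_sym => /connect1.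
Qed.

Lemma Kst_dist_le2 u v : (dist (Kst s t) u v <= 2)%N.
Proof.
have center_dist w : (dist (Kst s t) Kst_center w <= 1)%N.
  rewrite (leq_dist Kst_connected); have [->|/Kst_center_adj/ball1//] := eqVneq w Kst_center.
  by rewrite (subsetP (ball_subS _ _ _)) // in_ball0.
apply: leq_trans (dist_triangle Kst_connected u Kst_center v) _.
by rewrite (dist_sym Kst_connected Kst_sym u) (leq_add (center_dist u) (center_dist v)).
Qed.

Lemma Kst_left_gt0 : (0 < #|Kst_left|)%N.
Proof.
have lt1n : (1 < n)%N by lia.
by apply/card_gt0P; exists (Ordinal lt1n); rewrite inE.
Qed.

Lemma Kst_right_gt0 : (0 < #|Kst_right|)%N.
Proof.
have ltsn : (s < n)%N by lia.
by apply/card_gt0P; exists (Ordinal ltsn); rewrite inE.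
Qed.

End Kst.

Theorem theorem3p5 (s t : nat) (hs : (2 <= s)%N) (ht : (2 <= t)%N)
  (e : rel 'I_(s + t - 1)) :
  simple_graph e -> connected_graph e ->
  D_cospectral e (Kst s t) -> graph_iso e (Kst s t).
Proof.
move=> [e_sym e_irr] e_connected cospectral.
have K_connected := Kst_connected hs ht.
have K_disjoint := Kst_disjoint s t.
have KE : distI_mx (Kst s t) = cross_mx (Kst_left s t) (Kst_right s t).
  exact: distI_mx_cross K_connected (Kst_dist_le2 hs ht) (@KstE s t) K_disjoint.
have [rankE traceE] :=
  cospectral_distI_mx e_sym e_connected (@Kst_sym s t) K_connected cospectral.
have rank_le3 : (\rank (distI_mx e) <= 3)%N by rewrite rankE KE rank_cross_mx.
have [A [B [AB farE]]] := far_cross e_sym e_irr e_connected rank_le3.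
have eE u v : e u v = (u != v) && ~~ cross A B u v by rewrite edgeE // farE.
have GE : distI_mx e = cross_mx A B.
  exact: distI_mx_cross e_connected (dist_le2 e_sym e_irr e_connected rank_le3) eE AB.
have := traceE 3; have := traceE 2; rewrite GE KE => trace2 trace3.
have [[cardA cardB]|[cardA cardB]] := cross_mx_traces_cards AB K_disjoint
  (Kst_left_gt0 hs ht) (Kst_right_gt0 hs ht) trace2 trace3.
  exact: cross_graph_iso AB K_disjoint cardA cardB eE (@KstE s t).
rewrite disjoint_sym in AB.
apply: cross_graph_iso AB K_disjoint cardB cardA _ (@KstE s t).
by move=> u v; rewrite eE crossC.
Qed.
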